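(* Let $L$ be an $n\times n$ real matrix (not necessarily symmetric) with nonpositive off-diagonal entries, and let $E$ be the set of unordered pairs $\{i,j\}$, $i\ne j$, with $L_{ij}+L_{ji}<0$; assume the graph $G=(\{1,\dots,n\},E)$ is connected and that nodes $1,\dots,n_l$ ($1\le n_l<n$) are labeled with values $f(1),\dots,f(n_l)$. Consider the Harmonic Functions prediction: the minimizer $\vec f\in\mathbb R^n$ of $\sum_{i\neq j}-L_{ij}(f_i-f_j)^2$ subject to $f_i=f(i)$ for $i\le n_l$. Set edge costs $d_{ij}=-2/(L_{ij}+L_{ji})$ for $\{i,j\}\in E$. Then for every unlabeled node $p$, the flow-based prediction with $\lambda=0$ and these costs equals the Harmonic Functions value $f_p$.
   Context: Flow-based prediction: orient each edge of $G$ arbitrarily; let $A$ be the $n\times |E|$ signed incidence matrix ($A_{ie}=+1$, $A_{je}=-1$ for $e$ oriented from $i$ to $j$), $A_l$ its rows $1,\dots,n_l$ and $A_u$ its remaining rows. For unlabeled $p$, $\vec b_p\in\mathbb R^{n-n_l}$ is zero except $-1$ at the entry of $p$. For $\lambda\ge0$, $\vec x$ is the unique minimizer of $\frac12\sum_{e} d_e(x_e^2+\lambda|x_e|)$ subject to $A_u\vec x=\vec b_p$, the weights are $\vec w(p)=A_l\vec x$, and the prediction is $f(p)=\sum_{i=1}^{n_l}w_i(p)f(i)$. *)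

(* Nodes are 'I_n; node i (0-based) is labeled iff val i < nl
   (paper's nodes 1..n_l). *)
From HB Require Import structures.
From mathcomp Require Import all_boot all_order all_algebra.
Set Implicit Arguments. Unset Strict Implicit. Unset Printing Implicit Defensive.
Import Order.TTheory GRing.Theory Num.Theory.
Local Open Scope ring_scope.

Section Defs.
Variables (R : realFieldType) (n : nat).

Definition edgeL (L : 'M[R]_n) : rel 'I_n :=
  fun i j => (i != j) && (L i j + L j i < 0).

Definition hf_energy (L : 'M[R]_n) (f : 'I_n -> R) : R :=
  \sum_(i < n) \sum_(j < n | i != j) - L i j * (f i - f j) ^+ 2.

Definition hf_feasible (nl : nat) (flab : 'I_n -> R) (f : 'I_n -> R) : Prop :=
  forall i : 'I_n, (i < nl)%N -> f i = flab i.

Definition hf_minimizer (L : 'M[R]_n) (nl : nat) (flab : 'I_n -> R)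
    (f : 'I_n -> R) : Prop :=
  hf_feasible nl flab f /\
  forall g, hf_feasible nl flab g -> hf_energy L f <= hf_energy L g.

(* An orientation o of the edges: o i j means edge {i,j} is oriented i -> j.
   A flow x assigns x i j to the oriented edge (i,j) (values at pairs with
   ~~ o i j are irrelevant). (A x)_k = sum_{e out of k} x_e - sum_{e into k} x_e. *)
Definition incid (o : rel 'I_n) (x : 'I_n -> 'I_n -> R) (k : 'I_n) : R :=
  \sum_(j < n | o k j) x k j - \sum_(j < n | o j k) x j k.

Definition dcost (L : 'M[R]_n) (i j : 'I_n) : R := - 2 / (L i j + L j i).

Definition flow_cost (L : 'M[R]_n) (o : rel 'I_n) (lambda : R)
    (x : 'I_n -> 'I_n -> R) : R :=
  2^-1 * \sum_(i < n) \sum_(j < n | o i j)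
           dcost L i j * (x i j ^+ 2 + lambda * `|x i j|).

Definition flow_feasible (o : rel 'I_n) (nl : nat) (p : 'I_n)
    (x : 'I_n -> 'I_n -> R) : Prop :=
  forall k : 'I_n, (nl <= k)%N -> incid o x k = (if k == p then -1 else 0).

Definition flow_minimizer (L : 'M[R]_n) (o : rel 'I_n) (lambda : R)
    (nl : nat) (p : 'I_n) (x : 'I_n -> 'I_n -> R) : Prop :=
  flow_feasible o nl p x /\
  forall y, flow_feasible o nl p y -> flow_cost L o lambda x <= flow_cost L o lambda y.

Definition flow_prediction (o : rel 'I_n) (nl : nat) (flab : 'I_n -> R)
    (x : 'I_n -> 'I_n -> R) : R :=
  \sum_(i < n | (i < nl)%N) incid o x i * flab i.

End Defs.

From HB Require Import structures.
From mathcomp Require Import all_boot all_order all_algebra.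
From mathcomp Require Import ring lra.
Set Implicit Arguments. Unset Strict Implicit. Unset Printing Implicit Defensive.
Import Order.TTheory GRing.Theory Num.Theory.
Local Open Scope ring_scope.

(* Both problems are governed by the symmetric weights w_ij = -(L_ij + L_ji)
   and the Laplacian (Δf)_k = sum_j w_kj (f_k - f_j).  The harmonic-functions
   minimizer is the solution of the Dirichlet problem f = flab on labeled nodes,
   Δf = 0 on unlabeled ones.  Since d_ij w_ij = 2, the optimal flow is the
   potential flow x_ij = w_ij (mu_i - mu_j) / 2 of the solution mu of Δmu = -2 e_p
   vanishing on labeled nodes.  The first-order condition of the flow problem,
   tested against the potential flow of f (which is divergence-free on unlabeled
   nodes because f is harmonic there), gives sum_k (Ax)_k f_k = 0; splitting this
   sum into labeled nodes and the single unlabeled node p, where (Ax)_p = -1,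
   turns it into  flow_prediction = f p. *)

Lemma quadratic_linear_coef0 (R : realFieldType) (c b a : R) :
  0 <= a -> (forall t, c <= c + t * b + t ^+ 2 * a) -> b = 0.
Proof.
move=> a_ge0 Hmin; apply/eqP; apply: contraT => b_neq0.
pose s := (a + 1)^-1.
have s_gt0 : 0 < s by rewrite invr_gt0; lra.
have as1 : 1 - a * s = s.
  by rewrite /s; field; apply/eqP; lra.
have b2_gt0 : 0 < b ^+ 2 by rewrite exprn_even_gt0.
have := Hmin (- b * s); rewrite -addrA lerDl.
have -> : - b * s * b + (- b * s) ^+ 2 * a = - (b ^+ 2 * s) * (1 - a * s) by ring.
by rewrite as1 mulNr oppr_ge0 leNgt (mulr_gt0 (mulr_gt0 b2_gt0 s_gt0) s_gt0).
Qed.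

Lemma sum_mul_indicator (R : realFieldType) (n : nat) (F : 'I_n -> R) i :
  \sum_(j < n) F j * (j == i)%:R = F i.
Proof.
rewrite (bigD1 i) //= eqxx mulr1 big1 ?addr0 // => j /negbTE ->.
by rewrite mulr0.
Qed.

Section Laplacian.
Variables (R : realFieldType) (n : nat) (L : 'M[R]_n).

Definition weight (i j : 'I_n) : R := if i == j then 0 else - (L i j + L j i).

Definition laplacian (f : 'I_n -> R) (k : 'I_n) : R :=
  \sum_(j < n) weight k j * (f k - f j).

Definition dirichlet (f : 'I_n -> R) : R :=
  2^-1 * \sum_(i < n) \sum_(j < n) weight i j * (f i - f j) ^+ 2.

Lemma weightC i j : weight i j = weight j i.
Proof. by rewrite /weight eq_sym; case: eqP => // _; rewrite addrC. Qed.

Lemma edgeL_sym i j : edgeL L i j = edgeL L j i.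
Proof. by rewrite /edgeL eq_sym addrC. Qed.

Lemma weight_gt0 i j : edgeL L i j -> 0 < weight i j.
Proof. by rewrite /edgeL /weight => /andP[/negbTE -> ?]; rewrite oppr_gt0. Qed.

Lemma dcost_weight i j : edgeL L i j -> dcost L i j * weight i j = 2.
Proof.
move=> e; have := weight_gt0 e; rewrite /dcost /weight.
case/andP: e => /negbTE -> _; rewrite oppr_gt0 => /ltr0_neq0 ?.
by field.
Qed.

Lemma dcost_ge0 i j : edgeL L i j -> 0 <= dcost L i j.
Proof.
move=> e; have : 0 < dcost L i j * weight i j by rewrite dcost_weight.
by rewrite pmulr_lgt0 ?weight_gt0 // => /ltW.
Qed.

Lemma hf_energyE f : hf_energy L f = dirichlet f.
Proof.
rewrite /hf_energy /dirichlet.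
set A := \sum_(i < n) _.
have AT : A = \sum_(i < n) \sum_(j < n | i != j) - L j i * (f i - f j) ^+ 2.
  rewrite /A (exchange_big_dep xpredT) //=; apply: eq_bigr => i _.
  apply: eq_big => [j|j _]; first by rewrite eq_sym.
  by congr (_ * _); ring.
suff -> : \sum_(i < n) \sum_(j < n) weight i j * (f i - f j) ^+ 2 = A + A.
  by field.
rewrite {2}AT /A -big_split /=; apply: eq_bigr => i _.
rewrite -big_split /= [RHS]big_mkcond /=; apply: eq_bigr => j _.
by rewrite /weight eq_sym; case: eqP => _ /=; ring.
Qed.

Lemma dirichlet_cross f h :
  \sum_(i < n) \sum_(j < n) weight i j * (f i - f j) * (h i - h j) =
  2 * \sum_(i < n) h i * laplacian f i.
Proof.
set S := \sum_(i < n) h i * laplacian f i.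
have S_out : S = \sum_(i < n) \sum_(j < n) weight i j * (f i - f j) * h i.
  by apply: eq_bigr => i _; rewrite /laplacian mulr_sumr; apply: eq_bigr => j _; ring.
have S_in : S = \sum_(i < n) \sum_(j < n) - (weight i j * (f i - f j) * h j).
  rewrite S_out exchange_big /=; apply: eq_bigr => i _; apply: eq_bigr => j _.
  by rewrite weightC; ring.
rewrite mulr2n mulrDl mul1r {1}S_out S_in -big_split /=; apply: eq_bigr => i _.
by rewrite -big_split /=; apply: eq_bigr => j _; ring.
Qed.

Lemma eq_dirichlet f g : f =1 g -> dirichlet f = dirichlet g.
Proof. by move=> fg; rewrite /dirichlet; under eq_bigr do under eq_bigr do rewrite !fg. Qed.

Lemma dirichletD f h t :
  dirichlet (fun i => f i + t * h i) =
  dirichlet f + t * (2 * \sum_(i < n) h i * laplacian f i) + t ^+ 2 * dirichlet h.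
Proof.
rewrite /dirichlet -dirichlet_cross.
have -> : \sum_(i < n) \sum_(j < n) weight i j * (f i + t * h i - (f j + t * h j)) ^+ 2 =
  \sum_(i < n) \sum_(j < n) weight i j * (f i - f j) ^+ 2
  + 2 * t * \sum_(i < n) \sum_(j < n) weight i j * (f i - f j) * (h i - h j)
  + t ^+ 2 * \sum_(i < n) \sum_(j < n) weight i j * (h i - h j) ^+ 2.
  rewrite !mulr_sumr -!big_split /=; apply: eq_bigr => i _.
  by rewrite !mulr_sumr -!big_split /=; apply: eq_bigr => j _; ring.
by field.
Qed.

Hypothesis L_offdiag_le0 : forall i j : 'I_n, i != j -> L i j <= 0.

Lemma weight_ge0 i j : 0 <= weight i j.
Proof.
rewrite /weight; case: eqP => // /eqP ij; rewrite oppr_ge0.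
have ji : j != i by rewrite eq_sym.
by have := L_offdiag_le0 ij; have := L_offdiag_le0 ji; lra.
Qed.

Lemma weight_eq0 i j : ~~ edgeL L i j -> weight i j = 0.
Proof.
move=> ne; apply/eqP; rewrite eq_le weight_ge0 andbT.
by move: ne; rewrite /edgeL /weight negb_and negbK; case: eqP => //= _; rewrite -leNgt lerNl oppr0.
Qed.

Lemma dirichlet_ge0 f : 0 <= dirichlet f.
Proof.
rewrite /dirichlet mulr_ge0 ?invr_ge0 ?ler0n //.
by do 2!apply: sumr_ge0 => ? _; rewrite mulr_ge0 ?weight_ge0 ?sqr_ge0.
Qed.

End Laplacian.

Section DirichletProblem.
Variables (R : realFieldType) (n nl : nat) (L : 'M[R]_n).
Hypothesis L_offdiag_le0 : forall i j : 'I_n, i != j -> L i j <= 0.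
Hypothesis L_connected : forall i j : 'I_n, connect (edgeL L) i j.
Hypothesis nl_gt0 : (0 < nl)%N.
Hypothesis nl_lt_n : (nl < n)%N.

Lemma harmonic_eq0 (V : 'I_n -> R) :
  (forall i : 'I_n, (i < nl)%N -> V i = 0) ->
  (forall k : 'I_n, (nl <= k)%N -> laplacian L V k = 0) ->
  forall i, V i = 0.
Proof.
move=> V_lab V_harm.
have pairing0 : \sum_(i < n) V i * laplacian L V i = 0.
  apply: big1 => i _; case: (ltnP i nl) => hi; first by rewrite V_lab ?mul0r.
  by rewrite V_harm ?mulr0.
have := dirichlet_cross L V V; rewrite pairing0 mulr0 => energy0.
have term_ge0 i j : 0 <= weight L i j * (V i - V j) * (V i - V j).
  by rewrite -mulrA mulr_ge0 ?weight_ge0 // -expr2 sqr_ge0.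
have V_edge i j : edgeL L i j -> V i = V j.
  move=> e; have row0 := psumr_eq0P (fun i _ => sumr_ge0 _ (fun j _ => term_ge0 i j)) energy0.
  move: (psumr_eq0P (fun j _ => term_ge0 i j) (row0 i isT) (i := j) isT).
  rewrite -mulrA => /eqP; rewrite mulf_eq0 (negbTE (lt0r_neq0 (weight_gt0 e))).
  by rewrite /= mulf_eq0 orbb subr_eq0 => /eqP.
pose i0 : 'I_n := Ordinal (ltn_trans nl_gt0 nl_lt_n).
move=> i; have /connectP[q pq ->] := L_connected i0 i; rewrite -(V_lab i0) //.
elim: q i0 pq => [|y q IH] x //= /andP[exy pq].
by rewrite (V_edge _ _ exy); apply: IH.
Qed.

Definition dirichlet_mx : 'M[R]_n :=
  \matrix_(j, i) if (i < nl)%N then (j == i)%:R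
                 else (j == i)%:R * \sum_(l < n) weight L i l - weight L i j.

Lemma dirichlet_mxE (V : 'rV[R]_n) i :
  (V *m dirichlet_mx) 0 i = if (i < nl)%N then V 0 i else laplacian L (V 0) i.
Proof.
rewrite mxE; case: ifP => hi.
  by under eq_bigr do rewrite mxE hi; rewrite sum_mul_indicator.
under eq_bigr do rewrite mxE hi mulrBr mulrA.
rewrite sumrB -mulr_suml sum_mul_indicator /laplacian mulr_sumr -sumrB.
by apply: eq_bigr => j _; rewrite weightC; ring.
Qed.

Lemma dirichlet_mx_unit : dirichlet_mx \in unitmx.
Proof.
rewrite -row_free_unit -kermx_eq0; apply/eqP/row_matrixP => r; rewrite row0.
have : row r (kermx dirichlet_mx) *m dirichlet_mx = 0 by apply/sub_kermxP/row_sub.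
set V := row r _ => V_ker.
suff V0 i : V 0 i = 0 by apply/rowP => i; rewrite V0 mxE.
apply: harmonic_eq0 => [j hj|k hk].
  by have := dirichlet_mxE V j; rewrite V_ker hj mxE.
by have := dirichlet_mxE V k; rewrite V_ker mxE ltnNge hk.
Qed.

Lemma dirichlet_problem_solvable (a c : 'I_n -> R) : exists V : 'I_n -> R,
  (forall i : 'I_n, (i < nl)%N -> V i = a i) /\
  (forall k : 'I_n, (nl <= k)%N -> laplacian L V k = c k).
Proof.
pose b : 'rV[R]_n := \row_i if (i < nl)%N then a i else c i.
pose V := b *m invmx dirichlet_mx.
have VE i : (V *m dirichlet_mx) 0 i = b 0 i.
  by rewrite /V -mulmxA mulVmx ?dirichlet_mx_unit // mulmx1.
exists (V 0); split => [i hi|k hk].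
  by have := VE i; rewrite dirichlet_mxE [b 0 i]mxE hi.
by have := VE k; rewrite dirichlet_mxE [b 0 k]mxE ltnNge hk.
Qed.

End DirichletProblem.

Section Flows.
Variables (R : realFieldType) (n : nat) (L : 'M[R]_n) (o : rel 'I_n).

Definition potential_flow (phi : 'I_n -> R) (i j : 'I_n) : R :=
  weight L i j * (phi i - phi j) / 2.

Definition flow_energy (x : 'I_n -> 'I_n -> R) : R :=
  2^-1 * \sum_(i < n) \sum_(j < n | o i j) dcost L i j * x i j ^+ 2.

Definition flow_pairing (x y : 'I_n -> 'I_n -> R) : R :=
  \sum_(i < n) \sum_(j < n | o i j) dcost L i j * x i j * y i j.

Lemma incidD (x y : 'I_n -> 'I_n -> R) t k :
  incid o (fun i j => x i j + t * y i j) k = incid o x k + t * incid o y k.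
Proof. by rewrite /incid !big_split /= -!mulr_sumr; ring. Qed.

Lemma sum_incid_mul (x : 'I_n -> 'I_n -> R) (g : 'I_n -> R) :
  \sum_(k < n) incid o x k * g k =
  \sum_(i < n) \sum_(j < n | o i j) x i j * (g i - g j).
Proof.
under eq_bigr do rewrite /incid mulrBl !mulr_suml.
rewrite sumrB [X in _ - X](exchange_big_dep xpredT) //= -sumrB.
by apply: eq_bigr => i _; rewrite -sumrB; apply: eq_bigr => j _; rewrite mulrBr.
Qed.

Lemma flow_cost0E x : flow_cost L o 0 x = flow_energy x.
Proof.
by rewrite /flow_cost /flow_energy; under eq_bigr do under eq_bigr do
  rewrite mul0r addr0.
Qed.

Lemma flow_pairingC x y : flow_pairing x y = flow_pairing y x.
Proof. by apply: eq_bigr => i _; apply: eq_bigr => j _; ring. Qed.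

Lemma eq_flow_energy x y : x =2 y -> flow_energy x = flow_energy y.
Proof. by move=> xy; rewrite /flow_energy; under eq_bigr do under eq_bigr do rewrite xy. Qed.

Lemma flow_energyD x y t :
  flow_energy (fun i j => x i j + t * y i j) =
  flow_energy x + t * flow_pairing x y + t ^+ 2 * flow_energy y.
Proof.
rewrite /flow_energy /flow_pairing.
have -> : \sum_(i < n) \sum_(j < n | o i j) dcost L i j * (x i j + t * y i j) ^+ 2 =
  \sum_(i < n) \sum_(j < n | o i j) dcost L i j * x i j ^+ 2
  + 2 * t * \sum_(i < n) \sum_(j < n | o i j) dcost L i j * x i j * y i j
  + t ^+ 2 * \sum_(i < n) \sum_(j < n | o i j) dcost L i j * y i j ^+ 2.
  rewrite !mulr_sumr -!big_split /=; apply: eq_bigr => i _.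
  by rewrite !mulr_sumr -!big_split /=; apply: eq_bigr => j _; ring.
by field.
Qed.

Hypothesis o_edge : forall i j : 'I_n, o i j -> edgeL L i j.
Hypothesis o_orient : forall i j : 'I_n, edgeL L i j -> o i j = ~~ o j i.

Lemma flow_energy_ge0 x : 0 <= flow_energy x.
Proof.
rewrite /flow_energy mulr_ge0 ?invr_ge0 ?ler0n //.
by apply: sumr_ge0 => i _; apply: sumr_ge0 => j /o_edge e;
  rewrite mulr_ge0 ?dcost_ge0 ?sqr_ge0.
Qed.

(* Since d_ij w_ij = 2, pairing with a potential flow is summation by parts. *)
Lemma flow_pairing_potential x (phi : 'I_n -> R) :
  flow_pairing x (potential_flow phi) = \sum_(k < n) incid o x k * phi k.
Proof.
rewrite sum_incid_mul; apply: eq_bigr => i _; apply: eq_bigr => j /o_edge e.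
have -> : dcost L i j * x i j * potential_flow phi i j =
  dcost L i j * weight L i j * (x i j * (phi i - phi j)) / 2 by rewrite /potential_flow; ring.
by rewrite dcost_weight //; field.
Qed.

(* Every edge at k is oriented exactly one way. *)
Lemma sum_edges_at (k : 'I_n) (G : 'I_n -> R) :
  (forall j, ~~ edgeL L k j -> G j = 0) ->
  \sum_(j < n) G j = \sum_(j < n | o k j) G j + \sum_(j < n | o j k) G j.
Proof.
move=> G_edge; rewrite (bigID (o k)) /=; congr (_ + _).
rewrite (bigID (fun j => o j k)) /= [X in _ + X]big1 ?addr0.
  apply: eq_bigl => j; case okj: (o k j) => //=.
  by have := o_edge okj; rewrite edgeL_sym => /o_orient ->; rewrite okj.
move=> j /andP[nokj nojk]; apply: G_edge; apply/negP => /o_orient.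
by move: nokj nojk; case: (o k j); case: (o j k).
Qed.

Hypothesis L_offdiag_le0 : forall i j : 'I_n, i != j -> L i j <= 0.

Lemma incid_potential_flow (phi : 'I_n -> R) k :
  incid o (potential_flow phi) k = laplacian L phi k / 2.
Proof.
rewrite /incid /laplacian mulr_suml (@sum_edges_at k); last first.
  by move=> j /(weight_eq0 L_offdiag_le0) ->; rewrite !mul0r.
congr (_ + _); rewrite -sumrN; apply: eq_bigr => j _.
by rewrite /potential_flow weightC; ring.
Qed.

End Flows.

Section Predictions.
Variables (R : realFieldType) (n nl : nat) (L : 'M[R]_n) (o : rel 'I_n).
Variables (flab : 'I_n -> R) (p : 'I_n).
Hypothesis L_offdiag_le0 : forall i j : 'I_n, i != j -> L i j <= 0.
Hypothesis o_edge : forall i j : 'I_n, o i j -> edgeL L i j.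
Hypothesis o_orient : forall i j : 'I_n, edgeL L i j -> o i j = ~~ o j i.
Hypothesis p_unlabeled : (nl <= p)%N.

Lemma harmonic_hf_minimizer f :
  hf_feasible nl flab f -> (forall k : 'I_n, (nl <= k)%N -> laplacian L f k = 0) ->
  hf_minimizer L nl flab f.
Proof.
move=> f_lab f_harm; split => // g g_lab; rewrite !hf_energyE.
rewrite (@eq_dirichlet _ _ L g (fun i => f i + 1 * (g i - f i))) => [|i]; last by ring.
rewrite dirichletD big1 ?mulr0 ?addr0 ?expr1n ?mul1r ?lerDl ?dirichlet_ge0 //.
move=> i _; case: (ltnP i nl) => hi; first by rewrite f_lab // g_lab // subrr mul0r.
by rewrite f_harm // mulr0.
Qed.

Lemma hf_minimizer_harmonic f :
  hf_minimizer L nl flab f -> forall k : 'I_n, (nl <= k)%N -> laplacian L f k = 0.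
Proof.
move=> [f_lab f_min] k hk; pose e_k (i : 'I_n) : R := (i == k)%:R.
suff : 2 * laplacian L f k = 0 by move/eqP; rewrite mulf_eq0 pnatr_eq0 => /eqP.
apply: (quadratic_linear_coef0 (dirichlet_ge0 L_offdiag_le0 e_k)) => t.
have := f_min (fun i => f i + t * e_k i); rewrite !hf_energyE dirichletD.
have -> : \sum_(i < n) e_k i * laplacian L f i = laplacian L f k.
  by rewrite -[RHS]sum_mul_indicator; apply: eq_bigr => i _; rewrite mulrC.
apply => i hi.
by rewrite /e_k (_ : i == k = false) ?mulr0 ?addr0 ?f_lab //; apply/negbTE;
  rewrite neq_ltn (leq_trans hi hk).
Qed.

Lemma potential_flow_orthogonal mu z :
  (forall i : 'I_n, (i < nl)%N -> mu i = 0) ->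
  (forall k : 'I_n, (nl <= k)%N -> incid o z k = 0) ->
  flow_pairing L o (potential_flow L mu) z = 0.
Proof.
move=> mu_lab z_div; rewrite flow_pairingC flow_pairing_potential //.
apply: big1 => k _; case: (ltnP k nl) => hk; first by rewrite mu_lab ?mulr0.
by rewrite z_div ?mul0r.
Qed.

Lemma potential_flow_minimizer mu :
  (forall i : 'I_n, (i < nl)%N -> mu i = 0) ->
  (forall k : 'I_n, (nl <= k)%N -> laplacian L mu k = if k == p then -2 else 0) ->
  flow_minimizer L o 0 nl p (potential_flow L mu).
Proof.
move=> mu_lab mu_lap.
have x_feas : flow_feasible o nl p (potential_flow L mu).
  move=> k hk; rewrite incid_potential_flow // mu_lap //.
  by case: (k == p); [field | rewrite mul0r].
split => // y y_feas; rewrite !flow_cost0E.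
pose z i j := y i j + (-1) * potential_flow L mu i j.
rewrite (@eq_flow_energy _ _ L o y (fun i j => potential_flow L mu i j + 1 * z i j));
  last by move=> i j; rewrite /z; ring.
rewrite flow_energyD potential_flow_orthogonal // => [|k hk].
  by rewrite mulr0 addr0 expr1n mul1r lerDl flow_energy_ge0.
by rewrite incidD y_feas // x_feas // mulN1r subrr.
Qed.

Lemma flow_minimizer_orthogonal x z :
  flow_minimizer L o 0 nl p x ->
  (forall k : 'I_n, (nl <= k)%N -> incid o z k = 0) ->
  flow_pairing L o x z = 0.
Proof.
move=> [x_feas x_min] z_div.
apply: (quadratic_linear_coef0 (c := flow_energy L o x) (flow_energy_ge0 o_edge z)) => t.
rewrite -flow_energyD -!flow_cost0E; apply: x_min => k hk.
by rewrite incidD x_feas // z_div // mulr0 addr0.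
Qed.

Lemma flow_prediction_hf f x :
  hf_minimizer L nl flab f -> flow_minimizer L o 0 nl p x ->
  flow_prediction o nl flab x = f p.
Proof.
move=> f_min x_min; have [f_lab _] := f_min; have [x_feas _] := x_min.
have f_div (k : 'I_n) : (nl <= k)%N -> incid o (potential_flow L f) k = 0.
  by move=> hk; rewrite incid_potential_flow // hf_minimizer_harmonic // mul0r.
have := flow_minimizer_orthogonal x_min f_div.
rewrite flow_pairing_potential // (bigID (fun k : 'I_n => (k < nl)%N)) /=.
rewrite [X in _ + X](bigD1 p) -?leqNgt //= x_feas // eqxx.
have others0 : \sum_(k < n | ~~ (k < nl)%N && (k != p)) incid o x k * f k = 0.
  by apply: big1 => k /andP[hk k_neq]; rewrite x_feas ?(negbTE k_neq) ?mul0r // leqNgt.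
rewrite others0 addr0 mulN1r (eq_bigr (fun k => incid o x k * flab k)) => [|k /f_lab ->//].
by move/eqP; rewrite addr_eq0 opprK => /eqP.
Qed.

End Predictions.

Theorem mainTheorem2 (R : realFieldType) (n nl : nat) (L : 'M[R]_n)
    (o : rel 'I_n) (flab : 'I_n -> R) (p : 'I_n) :
  (forall i j : 'I_n, i != j -> L i j <= 0) ->
  (forall i j : 'I_n, connect (edgeL L) i j) ->
  (0 < nl)%N -> (nl < n)%N ->
  (forall i j : 'I_n, o i j -> edgeL L i j) ->
  (forall i j : 'I_n, edgeL L i j -> o i j = ~~ o j i) ->
  (nl <= p)%N ->
  (exists f, hf_minimizer L nl flab f) /\
  (exists x, flow_minimizer L o 0 nl p x) /\
  (forall f x, hf_minimizer L nl flab f -> flow_minimizer L o 0 nl p x ->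
     flow_prediction o nl flab x = f p).
Proof.
move=> L_le0 L_conn nl_gt0 nl_lt_n o_edge o_orient p_unlabeled.
have solve := dirichlet_problem_solvable L_le0 L_conn nl_gt0 nl_lt_n.
split; [|split].
- have [f [f_lab f_harm]] := solve flab (fun _ => 0).
  by exists f; apply: harmonic_hf_minimizer.
- have [mu [mu_lab mu_lap]] := solve (fun _ => 0) (fun k => if k == p then -2 else 0).
  by exists (potential_flow L mu); apply: potential_flow_minimizer.
- by move=> f x; apply: flow_prediction_hf.
Qed.
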